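(* Let $[\alpha]_{K\times K}\in\mathcal A_{\mathrm{SLS}}$. Then for every subset $S\subseteq[K]$ there exists a p-optimal cyclic partition of $S$, i.e., disjoint cycles $\pi_1,\dots,\pi_n$ with $\bigcup_{l=1}^n\{\pi_l\}=S$ and $\mathcal D_{\Sigma,\mathrm{P\text{-}TIN}}(S)=\Delta_{\pi_1}+\cdots+\Delta_{\pi_n}$.
   Context: $[\alpha]_{K\times K}$ is a matrix of nonnegative reals. SLS regime: $\mathcal A_{\mathrm{SLS}}=\{[\alpha]\in\mathbb R_+^{K\times K}:\ \alpha_{ii}\ge\max(\alpha_{ij},\alpha_{ki},\alpha_{ik}+\alpha_{ji}-\alpha_{jk})\ \forall i,j,k\in[K],\ i\notin\{j,k\}\}$. Cycles: a cycle $\pi=(i_1\to\cdots\to i_M)$, $M\ge1$, is an ordered list of distinct indices of $[K]$, read cyclically ($i_{M+1}=i_1$); $\{\pi\}=\{i_1,\dots,i_M\}$; $\Pi$ is the set of all cycles; cycles are disjoint if their sets are disjoint; a cyclic partition of $S$ is a collection of disjoint cycles whose sets have union $S$. $\delta_{ij}=\alpha_{ii}-\alpha_{ji}$ ($i\neq j$), $\delta_{ii}=0$; $\Delta_\pi=\sum_{m=1}^M\delta_{i_mi_{m+1}}$ if $M>1$, $\Delta_\pi=\alpha_{i_1i_1}$ if $M=1$. For $S\subseteq[K]$, $\mathcal D_{\mathrm{P\text{-}TIN}}(S)=\{(d_k)_{k\in[K]}\in\mathbb R^K: d_k=0\ (k\notin S),\ d_k\ge0\ (k\in S),\ \sum_{k\in\{\pi\}}d_k\le\Delta_\pi\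 \forall \pi\in\Pi \text{ with } \{\pi\}\subseteq S\}$, and $\mathcal D_{\Sigma,\mathrm{P\text{-}TIN}}(S)=\max_{d\in\mathcal D_{\mathrm{P\text{-}TIN}}(S)}\sum_{k\in S}d_k$. *)

(* Scalars: an arbitrary real field R (the paper uses the reals;
   the statement is purely order-theoretic/linear, so this is a generalization). *)
From HB Require Import structures.
From mathcomp Require Import all_boot all_order all_algebra.
Set Implicit Arguments. Unset Strict Implicit. Unset Printing Implicit Defensive.
Import Order.TTheory GRing.Theory Num.Theory.
Local Open Scope ring_scope.

Definition in_A_SLS (R : realFieldType) (K : nat) (alpha : 'M[R]_K) : Prop :=
  (forall i j : 'I_K, 0 <= alpha i j) /\
  (forall i j k : 'I_K, i != j -> i != k ->
     [/\ alpha i j <= alpha i i, alpha k i <= alpha i i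
       & alpha i k + alpha j i - alpha j k <= alpha i i]).

Definition delta (R : realFieldType) (K : nat) (alpha : 'M[R]_K) (i j : 'I_K) : R :=
  if i == j then 0 else alpha i i - alpha j i.

(* A cycle pi = (i_1 -> ... -> i_M), M >= 1: a nonempty duplicate-free list of
   indices, read cyclically; its set {pi} is the set of its entries. *)
Definition is_cycle (K : nat) (c : seq 'I_K) : bool := (0 < size c)%N && uniq c.

Definition Delta (R : realFieldType) (K : nat) (alpha : 'M[R]_K) (c : seq 'I_K) : R :=
  match c with
  | [:: i] => alpha i i
  | _ => \sum_(i <- c) delta alpha i (next c i)
  end.

Definition in_D_PTIN (R : realFieldType) (K : nat) (alpha : 'M[R]_K)
    (S : {set 'I_K}) (d : 'I_K -> R) : Prop :=
  [/\ forall k, k \notin S -> d k = 0,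
      forall k, k \in S -> 0 <= d k
    & forall c : seq 'I_K, is_cycle c -> {subset c <= S} ->
        \sum_(k <- c) d k <= Delta alpha c].

(* v = D_{Sigma,P-TIN}(S) = max_{d in D_{P-TIN}(S)} sum_{k in S} d_k :
   the maximum is attained and equals v. *)
Definition is_DSigma_PTIN (R : realFieldType) (K : nat) (alpha : 'M[R]_K)
    (S : {set 'I_K}) (v : R) : Prop :=
  (exists2 d, in_D_PTIN alpha S d & \sum_(k in S) d k = v) /\
  (forall d, in_D_PTIN alpha S d -> \sum_(k in S) d k <= v).

(* Disjointness of the (nonempty, duplicate-free) cycles in
   the collection is expressed as: the concatenation has no repetitions. *)
Definition cyclic_partition (K : nat) (S : {set 'I_K}) (P : seq (seq 'I_K)) : Prop :=
  [/\ all (@is_cycle K) P, uniq (flatten P) & S = [set k | k \in flatten P]].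

(* Let gamma i j be the cost of an arc i -> j in a cycle: delta_ij, or alpha_ii
   for a loop, so that Delta_pi is the sum of gamma around pi.  A permutation s
   supported on S with minimal cost sum_(i in S) gamma i (s i) yields, through
   its cycles, a cyclic partition of S whose value is that cost, and every d in
   D_P-TIN(S) sums to at most the value of any cyclic partition.  For the
   converse we construct the dual solution of this assignment problem: the
   minimality of s means that the reduced costs have no negative cycle, so
   shortest-path potentials q exist, and d_i = gamma i (s i) + q_i - q_(s i)
   satisfies every cycle constraint and sums to the cost of s.  It is
   nonnegative because the SLS conditions say precisely that gamma satisfies
   the triangle inequality gamma m h <= gamma m i + gamma i h for m != h. *)

From HB Require Import structures.
From mathcomp Require Import all_boot all_order all_algebra.
From mathcomp Require Import fingroup perm.
From mathcomp Require Import lra.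
Set Implicit Arguments. Unset Strict Implicit. Unset Printing Implicit Defensive.
Import Order.TTheory GRing.Theory Num.Theory.
Local Open Scope ring_scope.

Lemma next_notin (T : eqType) (p : seq T) x : x \notin p -> next p x = x.
Proof. by move=> xNp; rewrite next_nth (negbTE xNp). Qed.

Lemma next_neq (T : eqType) (p : seq T) x :
  uniq p -> (1 < size p)%N -> x \in p -> next p x != x.
Proof.
move=> Up p_gt1 /rot_to[n q pq]; rewrite -(next_rot n Up) pq.
have : uniq (x :: q) by rewrite -pq rot_uniq.
have : (1 < size (x :: q))%N by rewrite -pq size_rot.
case: q {pq} => [|y q] //= _ /andP[xNyq _]; rewrite eqxx.
by apply: contraNneq xNyq => ->; rewrite mem_head.
Qed.

Lemma perm_eq_map_next (T : eqType) (p : seq T) :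
  uniq p -> perm_eq (map (next p) p) p.
Proof.
move=> Up; apply: uniq_perm => //.
  by rewrite (map_inj_uniq (can_inj (prev_next Up))).
move=> x; apply/mapP/idP => [[y yp ->] | xp]; first by rewrite mem_next.
by exists (prev p x); rewrite ?mem_prev ?next_prev.
Qed.

Definition uniq_seqs (T : finType) : seq (seq T) :=
  flatten [seq permutations (enum A) | A : {set T}].

Lemma mem_uniq_seqs (T : finType) (p : seq T) : (p \in uniq_seqs T) = uniq p.
Proof.
apply/flattenP/idP => [[_ /mapP[A _ ->]] | Up].
  by rewrite mem_permutations => /perm_uniq ->; exact: enum_uniq.
exists (permutations (enum [set x in p])); first by apply: map_f; rewrite mem_enum.
rewrite mem_permutations uniq_perm ?enum_uniq // => x.
by rewrite mem_enum inE.
Qed.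

Lemma bigmin_seq_attained d (T : orderType d) (I : eqType) (r : seq I)
    (P : pred I) (F : I -> T) (x0 : T) i0 :
  i0 \in r -> P i0 -> (F i0 <= x0)%O ->
  exists2 i, (i \in r) && P i & \big[Order.min/x0]_(i <- r | P i) F i = F i.
Proof.
move=> ri0 Pi0 Fi0.
have : \big[Order.min/x0]_(i <- r | P i) F i = x0 \/
    exists2 i, (i \in r) && P i & \big[Order.min/x0]_(i <- r | P i) F i = F i.
  rewrite big_seq_cond; elim/big_ind: _ => [|a b Ha Hb|i Hi]; first by left.
    by rewrite minEle; case: ifP.
  by right; exists i.
case=> [min_x0|//]; exists i0; first by rewrite ri0.
by apply/le_anti; rewrite ge_bigmin_seq //= min_x0 Fi0.
Qed.

Section WalkCost.
Variables (T : eqType) (R : numDomainType) (c : T -> T -> R).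

Definition walk_cost (x : T) (p : seq T) : R := \sum_(v <- pairmap c x p) v.

Lemma walk_cost_nil x : walk_cost x [::] = 0.
Proof. exact: big_nil. Qed.

Lemma walk_cost_cons x y p : walk_cost x (y :: p) = c x y + walk_cost y p.
Proof. exact: big_cons. Qed.

Lemma walk_cost_cat x p1 p2 :
  walk_cost x (p1 ++ p2) = walk_cost x p1 + walk_cost (last x p1) p2.
Proof. by rewrite /walk_cost pairmap_cat big_cat. Qed.

Lemma walk_cost_rcons x p y :
  walk_cost x (rcons p y) = walk_cost x p + c (last x p) y.
Proof. by rewrite -cats1 walk_cost_cat walk_cost_cons walk_cost_nil addr0. Qed.

Lemma walk_cost_fpath (f : T -> T) x p : fpath f x p ->
  walk_cost x p = \sum_(y <- belast x p) c y (f y).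
Proof.
elim: p x => [|y p IHp] x /=; first by rewrite walk_cost_nil big_nil.
by case/andP=> /eqP <- /IHp; rewrite walk_cost_cons big_cons => ->.
Qed.

Lemma walk_cost_closed x p : uniq (x :: p) ->
  walk_cost x (rcons p x) = \sum_(y <- x :: p) c y (next (x :: p) y).
Proof. by move/cycle_next/walk_cost_fpath ->; rewrite belast_rcons. Qed.

End WalkCost.

Section ShortestPathPotential.
Variables (T : finType) (R : realDomainType) (S : {set T}) (c : T -> T -> R).
Hypothesis cycle_cost_ge0 : forall L : seq T, uniq L -> {subset L <= S} ->
  0 <= \sum_(y <- L) c y (next L y).

Definition path_to (x : T) (p : seq T) : bool :=
  [&& p != [::], uniq p, all [in S] p & last x p == x].

Definition path_cost (p : seq T) : R :=
  if p is y :: p' then walk_cost c y p' else 0.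

Definition potential (x : T) : R :=
  \big[Num.min/0]_(p <- uniq_seqs T | path_to x p) path_cost p.

Lemma potential_le x p : path_to x p -> potential x <= path_cost p.
Proof.
by move=> px; apply: ge_bigmin_seq; rewrite // mem_uniq_seqs; case/and4P: px.
Qed.

Lemma potential_le0 x : potential x <= 0.
Proof. exact: bigmin_le_id. Qed.

Lemma potential_attained x : x \in S ->
  exists2 p, path_to x p & potential x = path_cost p.
Proof.
move=> xS; have x_to : path_to x [:: x] by rewrite /path_to /= xS eqxx.
have [||p /andP[_ px] min_p] :=
  bigmin_seq_attained (r := uniq_seqs T) (F := path_cost) (x0 := 0) _ x_to.
- by rewrite mem_uniq_seqs.
- by rewrite /= walk_cost_nil.
- by exists p.
Qed.

Lemma path_cost_split p1 y p2 :
  path_cost (p1 ++ y :: p2) = path_cost (rcons p1 y) + walk_cost c y p2.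
Proof.
case: p1 => [|x p1] /=; first by rewrite walk_cost_nil add0r.
by rewrite walk_cost_cat walk_cost_cons walk_cost_rcons addrA.
Qed.

Lemma potential_triangle k j : k \in S -> j \in S ->
  potential j <= potential k + c k j.
Proof.
move=> kS jS; have [p /and4P[p_nil Up pS /eqP p_k] ->] := potential_attained kS.
have [jp | jNp] := boolP (j \in p); last first.
  have pj_to : path_to j (rcons p j).
    rewrite /path_to last_rcons rcons_uniq all_rcons jNp Up jS pS eqxx.
    by case: (p).
  apply: le_trans (potential_le pj_to) _.
  case: p p_nil p_k {Up pS jNp pj_to} => // x p _ /= p_k.
  by rewrite walk_cost_rcons p_k.
(* Cut the path at j; the discarded part closes into a cycle of cost >= 0. *)
case/splitPr: jp Up pS p_k => p1 p2; rewrite cat_uniq all_cat last_cat /=.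
case/and3P=> Up1 /norP[jNp1 _] Ujp2 /and3P[p1S _ p2S] p2_k.
have p1j_to : path_to j (rcons p1 j).
  rewrite /path_to last_rcons rcons_uniq all_rcons jNp1 Up1 jS p1S eqxx.
  by case: (p1).
have closing : 0 <= walk_cost c j p2 + c k j.
  rewrite -p2_k -walk_cost_rcons walk_cost_closed //; apply: cycle_cost_ge0 => // y.
  by rewrite inE => /predU1P[-> //|]; move/allP: p2S; apply.
rewrite path_cost_split -addrA; apply: le_trans (potential_le p1j_to) _.
by rewrite lerDl.
Qed.

Lemma potential_pred x : x \in S -> potential x = 0 \/
  exists k, [/\ k \in S, k != x & potential k + c k x <= potential x].
Proof.
move=> xS; have [p px ->] := potential_attained xS; case/and4P: px.
case/lastP: p => [|p z] // _; rewrite last_rcons => + + /eqP zx; rewrite {z}zx.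
case: p => [|y p]; first by left; apply: walk_cost_nil.
rewrite rcons_uniq all_rcons => /andP[xNyp Uyp] /andP[_ ypS]; right.
have yp_to : path_to (last y p) (y :: p) by rewrite /path_to Uyp ypS eqxx.
exists (last y p); split.
- by move/allP: ypS; apply; exact: mem_last.
- by apply: contraNneq xNyp => <-; exact: mem_last.
- by rewrite /= walk_cost_rcons lerD2r; exact: potential_le yp_to.
Qed.

End ShortestPathPotential.

Lemma sum_perm_on (T : finType) (R : nmodType) (S : {set T}) (s : {perm T})
    (F : T -> R) :
  perm_on S s -> \sum_(i in S) F (s i) = \sum_(i in S) F i.
Proof.
move=> s_on; rewrite [RHS](reindex_inj (@perm_inj _ s)).
by apply: eq_bigl => i; rewrite (perm_closed _ s_on).
Qed.

Lemma sum_set_seq (T : finType) (R : nmodType) (S : {set T}) (L : seq T)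
    (F : T -> R) :
  uniq L -> {subset L <= S} -> (forall y, y \in S -> y \notin L -> F y = 0) ->
  \sum_(y in S) F y = \sum_(y <- L) F y.
Proof.
move=> UL LS F0; rewrite big_uniq // (bigID [in L]) /= [X in _ + X]big1 ?addr0.
  by apply: eq_bigl => y; apply/andb_idl/LS.
by move=> y /andP[]; exact: F0.
Qed.

Section CycleCoverDuality.
Variables (T : finType) (R : realDomainType) (S : {set T}) (gamma : T -> T -> R).

Definition cover_cost (s : {perm T}) : R := \sum_(i in S) gamma i (s i).

Variable s : {perm T}.
Hypothesis s_on : perm_on S s.
Hypothesis s_min : forall t, perm_on S t -> cover_cost s <= cover_cost t.

(* The change of cost when the arc entering k is redirected to j. *)
Definition reduced_cost (k j : T) : R :=
  gamma ((s^-1)%g k) j - gamma ((s^-1)%g k) k.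

Lemma reduced_cycle_cost_ge0 (L : seq T) : uniq L -> {subset L <= S} ->
  0 <= \sum_(y <- L) reduced_cost y (next L y).
Proof.
move=> UL LS; pose t := perm (can_inj (prev_next UL)).
have tE y : t y = next L y by rewrite permE.
have t_on : perm_on S t.
  apply/subsetP => y; rewrite inE tE; apply: contraR => yNS.
  by rewrite next_notin ?eqxx //; apply: contra yNS; exact: LS.
have := s_min (perm_onM s_on t_on); rewrite -subr_ge0 /cover_cost -sumrB.
under eq_bigr => i _ do rewrite permM -[in X in gamma X](permK s i).
rewrite (sum_perm_on (fun y => reduced_cost y (t y)) s_on).
rewrite (sum_set_seq UL LS); last first.
  by move=> y _ yNL; rewrite tE next_notin // /reduced_cost subrr.
by rewrite (eq_bigr _ (fun y _ => congr1 (reduced_cost y) (tE y))).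
Qed.

Local Notation q := (potential S reduced_cost).

Definition cover_dual (i : T) : R :=
  if i \in S then gamma i (s i) + q i - q (s i) else 0.

Lemma cover_dual_le i j : i \in S -> j \in S ->
  cover_dual i <= gamma i j + q i - q j.
Proof.
move=> iS jS; rewrite /cover_dual iS.
have siS : s i \in S by rewrite (perm_closed _ s_on).
have := potential_triangle reduced_cycle_cost_ge0 siS jS.
rewrite /reduced_cost permK; lra.
Qed.

Lemma cover_dual_cycle (L : seq T) : uniq L -> {subset L <= S} ->
  \sum_(k <- L) cover_dual k <= \sum_(k <- L) gamma k (next L k).
Proof.
move=> UL LS; apply: le_trans
  (_ : _ <= \sum_(k <- L) (gamma k (next L k) + q k - q (next L k))) _.
  rewrite big_seq [X in _ <= X]big_seq; apply: ler_sum => k kL.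
  by apply: cover_dual_le; apply: LS; rewrite ?mem_next.
rewrite sumrB big_split /= -(big_map (next L) xpredT q).
by rewrite (perm_big _ (perm_eq_map_next UL)) addrK.
Qed.

Lemma cover_dual_sum : \sum_(i in S) cover_dual i = cover_cost s.
Proof.
rewrite (eq_bigr (fun i => gamma i (s i) + (q i - q (s i)))); last first.
  by move=> i iS; rewrite /cover_dual iS addrA.
by rewrite big_split sumrB /= (sum_perm_on q s_on) subrr addr0.
Qed.

Lemma cover_dual_pred i : i \in S -> q i = 0 \/
  exists k, [/\ k \in S, k != s (s i) & q k + reduced_cost k i <= q i].
Proof.
move=> iS; have [ssi | ssi] := eqVneq (s (s i)) i; last first.
  by right; exists i; rewrite /reduced_cost subrr addr0 eq_sym.
case: (potential_pred reduced_cost iS) => [|[k [kS ki Hk]]]; first by left.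
by right; exists k; rewrite ssi.
Qed.

Lemma cover_dual_ge i k :
  i \in S -> k \in S -> q k + reduced_cost k i <= q i ->
  gamma i (s i) + gamma ((s^-1)%g k) i - gamma ((s^-1)%g k) (s i)
    <= cover_dual i.
Proof.
move=> iS kS Hk; rewrite /cover_dual iS.
have siS : s i \in S by rewrite (perm_closed _ s_on).
have := potential_triangle reduced_cycle_cost_ge0 kS siS.
move: Hk; rewrite /reduced_cost; lra.
Qed.

Lemma cover_dual_ge0 :
  (forall i j, 0 <= gamma i j) ->
  (forall i m h, m != h -> gamma m h <= gamma m i + gamma i h) ->
  forall i, 0 <= cover_dual i.
Proof.
move=> gamma_ge0 gamma_triangle i; have [iS | iNS] := boolP (i \in S); last first.
  by rewrite /cover_dual (negbTE iNS).
case: (cover_dual_pred iS) => [qi0 | [k [kS k_ssi Hk]]].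
  rewrite /cover_dual iS qi0 addr0; have := potential_le0 S reduced_cost (s i).
  have := gamma_ge0 i (s i); lra.
have m_si : (s^-1)%g k != s i by apply: contraNneq k_ssi => <-; rewrite permKV.
have := cover_dual_ge iS kS Hk; have := gamma_triangle i _ _ m_si.
have := gamma_ge0 i (s i); lra.
Qed.

End CycleCoverDuality.

Section PermCycles.
Variables (T : finType) (S : {set T}) (s : {perm T}).
Hypothesis s_on : perm_on S s.

Definition perm_cycles : seq (seq T) :=
  [seq orbit s x | x <- enum S & froots s x].

Lemma perm_cycles_cycle : all (fun c => (0 < size c)%N && uniq c) perm_cycles.
Proof.
apply/allP => _ /mapP[x _ ->].
by rewrite size_orbit fingraph.order_gt0 orbit_uniq.
Qed.

Lemma next_perm_cycles c y : c \in perm_cycles -> y \in c -> next c y = s y.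
Proof. by case/mapP=> x _ ->; apply: nextE; apply: cycle_orbit; exact: perm_inj. Qed.

Let s_sym : connect_sym (frel s) := fconnect_sym (@perm_inj _ s).

Lemma uniq_flatten_perm_cycles : uniq (flatten perm_cycles).
Proof.
rewrite /perm_cycles; have : uniq [seq x <- enum S | froots s x].
  by rewrite filter_uniq ?enum_uniq.
have : all (froots s) [seq x <- enum S | froots s x] by apply: filter_all.
elim: [seq x <- _ | _] => [|x xs IHxs] //= /andP[rx rxs] /andP[xNxs Uxs].
rewrite cat_uniq orbit_uniq IHxs // andbT; apply/hasPn => y.
case/flattenP=> _ /mapP[x' x'xs ->]; rewrite -!fconnect_orbit => x'y.
apply: contra xNxs => xy; suff -> : x = x' by [].
rewrite -(eqP rx) -(eqP (allP rxs x' x'xs)); apply/eqP.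
by rewrite root_connect // (connect_trans xy) // s_sym.
Qed.

Lemma mem_flatten_perm_cycles y : (y \in flatten perm_cycles) = (y \in S).
Proof.
have orbitS x z : fconnect s x z -> (x \in S) = (z \in S).
  apply: (fconnect_invariant (k := [in S])) => u.
  by rewrite /invariant inE /= (perm_closed _ s_on) eqxx.
apply/flattenP/idP => [[c /mapP[x + ->] yx] | yS].
  rewrite mem_filter mem_enum => /andP[_ xS].
  by rewrite -(orbitS x) ?fconnect_orbit.
exists (orbit s (froot s y)); last by rewrite -fconnect_orbit s_sym connect_root.
apply: map_f; rewrite mem_filter mem_enum -(orbitS _ _ (connect_root _ y)).
by rewrite yS andbT roots_root.
Qed.

End PermCycles.

Lemma sum_cyclic_partition (R : nmodType) (K : nat) (S : {set 'I_K})
    (P : seq (seq 'I_K)) (F : 'I_K -> R) :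
  cyclic_partition S P -> \sum_(c <- P) \sum_(y <- c) F y = \sum_(y in S) F y.
Proof.
case=> _ UP ->; rewrite -big_flatten /= big_uniq //.
by apply: eq_bigl => y; rewrite inE.
Qed.

Lemma D_PTIN_sum_le (R : realFieldType) (K : nat) (alpha : 'M[R]_K)
    (S : {set 'I_K}) (P : seq (seq 'I_K)) (d : 'I_K -> R) :
  cyclic_partition S P -> in_D_PTIN alpha S d ->
  \sum_(k in S) d k <= \sum_(c <- P) Delta alpha c.
Proof.
move=> partP [_ _ d_cycle]; rewrite -(sum_cyclic_partition _ partP).
rewrite big_seq [X in _ <= X]big_seq; apply: ler_sum => c cP.
case: partP => /allP/(_ c cP) c_cycle _ defS; apply: d_cycle => // y yc.
by rewrite defS inE; apply/flattenP; exists c.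
Qed.

Definition arc_cost (R : realFieldType) (K : nat) (alpha : 'M[R]_K)
    (i j : 'I_K) : R :=
  if i == j then alpha i i else delta alpha i j.

Lemma Delta_arc_cost (R : realFieldType) (K : nat) (alpha : 'M[R]_K)
    (c : seq 'I_K) :
  is_cycle c -> Delta alpha c = \sum_(i <- c) arc_cost alpha i (next c i).
Proof.
case/andP; case: c => [|a [|b c]] // _ Uc.
  by rewrite big_seq1 /arc_cost /= if_same eqxx.
apply: eq_big_seq => i ic.
by rewrite /arc_cost eq_sym (negbTE (next_neq Uc _ ic)).
Qed.

Section SLSArcCost.
Variables (R : realFieldType) (K : nat) (alpha : 'M[R]_K).
Hypothesis sls : in_A_SLS alpha.

Lemma arc_cost_ge0 i j : 0 <= arc_cost alpha i j.
Proof.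
case: sls => alpha_ge0 alpha_sls; rewrite /arc_cost /delta.
have [// | ij] := eqVneq i j; rewrite subr_ge0.
by case: (alpha_sls i j j).
Qed.

Lemma arc_cost_triangle i m h : m != h ->
  arc_cost alpha m h <= arc_cost alpha m i + arc_cost alpha i h.
Proof.
move=> mh; case: sls => alpha_ge0 alpha_sls.
rewrite /arc_cost /delta (negbTE mh).
have [<- | mi] := eqVneq m i; first by rewrite (negbTE mh) lerDr alpha_ge0.
have [<- | ih] := eqVneq i h; first by rewrite lerDl alpha_ge0.
have im : i != m by rewrite eq_sym.
have [_ _] := alpha_sls i h m ih im; lra.
Qed.

End SLSArcCost.

Lemma perm_cycles_partition (K : nat) (S : {set 'I_K}) (s : {perm 'I_K}) :
  perm_on S s -> cyclic_partition S (perm_cycles S s).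
Proof.
move=> s_on; split; [exact: perm_cycles_cycle | exact: uniq_flatten_perm_cycles |].
by apply/setP => y; rewrite inE mem_flatten_perm_cycles.
Qed.

Lemma sum_Delta_perm_cycles (R : realFieldType) (K : nat) (alpha : 'M[R]_K)
    (S : {set 'I_K}) (s : {perm 'I_K}) :
  perm_on S s ->
  \sum_(c <- perm_cycles S s) Delta alpha c = cover_cost S (arc_cost alpha) s.
Proof.
move=> s_on; have partS := perm_cycles_partition s_on.
rewrite /cover_cost -(sum_cyclic_partition _ partS).
rewrite big_seq [RHS]big_seq; apply: eq_bigr => c cP.
rewrite Delta_arc_cost; last exact: (allP (perm_cycles_cycle S s)).
by apply: eq_big_seq => y yc; rewrite (next_perm_cycles cP yc).
Qed.

Theorem theorem5 (R : realFieldType) (K : nat) (alpha : 'M[R]_K) :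
  in_A_SLS alpha ->
  forall S : {set 'I_K},
    exists P : seq (seq 'I_K),
      cyclic_partition S P /\
      is_DSigma_PTIN alpha S (\sum_(c <- P) Delta alpha c).
Proof.
move=> sls S; set gamma := arc_cost alpha.
have [s s_on s_min] := arg_minP (cover_cost S gamma) (perm_on1 S).
have partS := perm_cycles_partition s_on.
exists (perm_cycles S s); split=> //; split; last first.
  by move=> d; exact: D_PTIN_sum_le.
exists (cover_dual S gamma s); last first.
  by rewrite sum_Delta_perm_cycles // cover_dual_sum.
split.
- by move=> k kNS; rewrite /cover_dual (negbTE kNS).
- move=> k _; apply: cover_dual_ge0 => //.
  + exact: arc_cost_ge0.
  + exact: arc_cost_triangle.
- move=> c /[dup] c_cycle /andP[_ Uc] cS; rewrite Delta_arc_cost //.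
  exact: cover_dual_cycle.
Qed.
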